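(* Let $R$ be a finite chain ring with maximal ideal $\langle\gamma\rangle$ where $\gamma$ has odd nilpotency index $e$, and residue field $\mathbb F_q$. Then for every positive integer $n$ with $\gcd(n,q)=1$ there is no self-dual cyclic code of length $n$ over $R$.
   Context: A finite chain ring is a finite commutative local ring whose ideals are linearly ordered; its maximal ideal is generated by a nilpotent $\gamma$ of nilpotency index $e$, with residue field $R/\langle\gamma\rangle$. A code of length $n$ is an $R$-submodule of $R^n$; cyclic means closed under cyclic shift; self-dual means $C=C^\perp$ for the standard inner product $[u,v]=\sum u_iv_i$. *)

From HB Require Import structures.
From mathcomp Require Import all_boot all_order all_algebra.
Set Implicit Arguments. Unset Strict Implicit. Unset Printing Implicit Defensive.
Import GRing.Theory.
Local Open Scope ring_scope.

Definition is_ideal (R : finComNzRingType) (I : {set R}) : bool :=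
  [&& (0 : R) \in I,
      [forall x, forall y, (x \in I) ==> (y \in I) ==> (x + y \in I)] &
      [forall r, forall x, (x \in I) ==> (r * x \in I)]].

Definition is_unitb (R : finComNzRingType) (x : R) : bool := [exists y, x * y == 1].

Definition principal (R : finComNzRingType) (g : R) : {set R} := [set g * r | r : R].

(* R is a finite chain ring whose maximal ideal is <g>, g of nilpotency index e:
   R is local with maximal ideal (= set of non-units) equal to <g>, the ideals
   of R are linearly ordered by inclusion, g^e = 0 and g^(e-1) <> 0. *)
Definition chain_ring_with (R : finComNzRingType) (g : R) (e : nat) : Prop :=
  [/\ (forall I J : {set R}, is_ideal I -> is_ideal J -> I \subset J \/ J \subset I),
      [set x : R | ~~ is_unitb x] = principal g,
      g ^+ e = 0 & g ^+ e.-1 != 0].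

Definition residue_size (R : finComNzRingType) (g : R) : nat :=
  (#|[set: R]| %/ #|principal g|)%N.

Definition is_code (R : finComNzRingType) (n : nat) (C : {set 'rV[R]_n}) : Prop :=
  [/\ 0 \in C,
      (forall u v, u \in C -> v \in C -> u + v \in C) &
      (forall (a : R) u, u \in C -> a *: u \in C)].

(* cyclic shift (c_0,...,c_{n-1}) |-> (c_{n-1},c_0,...,c_{n-2}) *)
Definition cshift (R : finComNzRingType) (n : nat) (v : 'rV[R]_n) : 'rV[R]_n :=
  \row_(i < n) v 0 (ord_pred i).

Definition is_cyclic_code (R : finComNzRingType) (n : nat) (C : {set 'rV[R]_n}) : Prop :=
  is_code C /\ (forall v, v \in C -> cshift v \in C).

Definition dotp (R : finComNzRingType) (n : nat) (u v : 'rV[R]_n) : R :=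
  \sum_(i < n) u 0 i * v 0 i.

Definition dual_code (R : finComNzRingType) (n : nat) (C : {set 'rV[R]_n}) : {set 'rV[R]_n} :=
  [set v | [forall u in C, dotp u v == 0]].

Definition self_dual (R : finComNzRingType) (n : nat) (C : {set 'rV[R]_n}) : Prop :=
  C = dual_code C.

(* Let C be a self-dual cyclic code of length n over R. The constant words of C
   form an ideal I of R, and the sum of the cyclic shifts of any codeword is the
   constant word carrying its coordinate sum. Self-duality therefore says that
   a lies in I iff a kills I, and forces n a^2 = 0 for a in I. Since n is
   coprime to q it is a unit, so I is an ideal equal to its own annihilator.
   As the ideals of R form a chain and the non-units are the multiples of
   gamma, with e = 2m+1 either I contains gamma^m or I lies in <gamma^m> and
   is killed by gamma^m; either way gamma^m is in I, whence
   gamma^(2m) = gamma^(e-1) = 0, a contradiction. *)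
From HB Require Import structures.
From mathcomp Require Import all_boot all_order all_algebra.
From mathcomp Require Import all_fingroup all_solvable zify.
Local Open Scope ring_scope.
Import GRing.Theory FinRing.Theory.

Section CosetOrder.
Local Open Scope group_scope.

Lemma mem_coprime_index {gT : finGroupType} {G H : {group gT}} (x : gT) (n : nat) :
  H <| G -> x \in G -> coprime n #|G : H| -> x ^+ n \in H -> x \in H.
Proof.
move=> nsHG Gx coprime_n xnH; have nHG := normal_norm nsHG.
have nHx : x \in 'N(H) := subsetP nHG x Gx.
have ord_dvd_n : (#[coset H x] %| n)%N.
  by rewrite order_dvdn -morphX //= coset_id.
have ord_dvd_index : (#[coset H x] %| #|G : H|)%N.
  by rewrite -card_quotient // order_dvdG // mem_quotient.
have : #[coset H x] = 1%N.
  by apply/eqP; rewrite -dvdn1 -(eqP coprime_n) dvdn_gcd ord_dvd_n.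
by move/eqP; rewrite order_eq1 => /eqP /(coset_idr nHx).
Qed.

End CosetOrder.

Lemma principalP {R : finComNzRingType} (h x : R) :
  reflect (exists r, x = h * r) (x \in principal h).
Proof. by apply: (iffP imsetP) => [[r _ ->]|[r ->]]; exists r. Qed.

Lemma principal_ideal {R : finComNzRingType} (h : R) : is_ideal (principal h).
Proof.
apply/and3P; split.
- by apply/principalP; exists 0; rewrite mulr0.
- apply/forallP=> x; apply/forallP=> y.
  apply/implyP=> /principalP [r ->]; apply/implyP=> /principalP [s ->].
  by apply/principalP; exists (r + s); rewrite mulrDr.
- apply/forallP=> r; apply/forallP=> x; apply/implyP=> /principalP [s ->].
  by apply/principalP; exists (r * s); rewrite mulrCA.
Qed.

Lemma idealD {R : finComNzRingType} (I : {set R}) (x y : R) :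
  is_ideal I -> x \in I -> y \in I -> x + y \in I.
Proof. by case/and3P=> _ /forallP /(_ x) /forallP /(_ y) /implyP H _ /H /implyP. Qed.

Lemma idealMl {R : finComNzRingType} (I : {set R}) (r x : R) :
  is_ideal I -> x \in I -> r * x \in I.
Proof. by case/and3P=> _ _ /forallP /(_ r) /forallP /(_ x) /implyP. Qed.

(* group_set refers to the additive group of R. *)
Lemma ideal_group_set {R : finComNzRingType} {I : {set R}} :
  is_ideal I -> group_set I.
Proof.
move=> Iid; apply/andP; split; first by case/and3P: Iid.
by apply/subsetP=> _ /mulsgP [x y Ix Iy ->]; rewrite zmodMgE idealD.
Qed.

Lemma natr_unitb_coprime_residue {R : finComNzRingType} (g : R) (n : nat) :
  [set x : R | ~~ is_unitb x] = principal g -> coprime n (residue_size g) ->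
  is_unitb (n%:R : R).
Proof.
move=> nonunits coprime_n.
suff : (n%:R : R) \notin principal g by rewrite -nonunits inE negbK.
apply/negP=> n_nonunit.
pose M := Group (ideal_group_set (principal_ideal g)).
have nsMR : (M <| [set: R])%g by rewrite /normal subsetT sub_abelian_norm ?zmod_abelian.
have one_in_M : (1 : R) \in M.
  refine (@mem_coprime_index _ [set: R]%G M (1 : R)%R n nsMR (in_setT _) _ _).
    by rewrite -divgS ?subsetT.
  by rewrite zmodXgE.
move: one_in_M; rewrite /= -nonunits inE => /negP; apply.
by apply/existsP; exists 1; rewrite mulr1.
Qed.

Lemma iter_ord_pred_mod {n : nat} (i : 'I_n) (k : nat) :
  ((iter k (@ord_pred n) i + k) %% n = i %% n)%N.
Proof.
have n_gt0 : (0 < n)%N by case: n i => [[]|].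
elim: k => [|k IHk] /=; first by rewrite addn0.
rewrite modnDml -IHk -(modnDr (_ + k)); congr (_ %% n)%N; lia.
Qed.

Lemma iter_ord_pred_inj {n : nat} (i : 'I_n) :
  injective (fun k : 'I_n => iter k (@ord_pred n) i).
Proof.
move=> k1 k2 /= eq_iter; apply: val_inj => /=.
have := iter_ord_pred_mod i k1; rewrite eq_iter -(iter_ord_pred_mod i k2).
by move/eqP; rewrite eqn_modDl !modn_small // => /eqP.
Qed.

Lemma iter_cshiftE {R : finComNzRingType} (n k : nat) (v : 'rV[R]_n) (j : 'I_n) :
  iter k (@cshift R n) v 0 j = v 0 (iter k (@ord_pred n) j).
Proof. by elim: k j => [|k IHk] j //=; rewrite mxE IHk -iterSr. Qed.

Lemma sum_iter_cshift {R : finComNzRingType} (n : nat) (v : 'rV[R]_n) :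
  \sum_(k < n) iter k (@cshift R n) v = const_mx (\sum_i v 0 i).
Proof.
apply/rowP=> i; rewrite mxE summxE.
under eq_bigr do rewrite iter_cshiftE.
by rewrite [RHS](reindex_inj (iter_ord_pred_inj i)).
Qed.

Section ConstantWords.

Context {R : finComNzRingType} {n : nat} {C : {set 'rV[R]_n}}.

Definition constant_words : {set R} := [set a | const_mx a \in C].

Lemma constant_words_ideal : is_code C -> is_ideal constant_words.
Proof.
case=> C0 CD CZ; apply/and3P; split.
- by rewrite inE (_ : const_mx 0 = 0) //; apply/rowP=> i; rewrite !mxE.
- apply/forallP=> x; apply/forallP=> y; rewrite !inE.
  apply/implyP=> Cx; apply/implyP=> Cy.
  by rewrite (_ : const_mx _ = const_mx x + const_mx y) ?CD //; apply/rowP=> i; rewrite !mxE.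
- apply/forallP=> r; apply/forallP=> x; rewrite !inE; apply/implyP=> Cx.
  by rewrite (_ : const_mx _ = r *: const_mx x) ?CZ //; apply/rowP=> i; rewrite !mxE.
Qed.

Lemma cyclic_code_sum_constant (v : 'rV[R]_n) :
  is_cyclic_code C -> v \in C -> \sum_i v 0 i \in constant_words.
Proof.
case=> -[C0 CD _] Cshift Cv; rewrite inE -sum_iter_cshift.
apply: (big_ind (fun w => w \in C)) => // k _.
by elim: (nat_of_ord k) => //= j; apply: Cshift.
Qed.

Lemma dotp_const_mx (u : 'rV[R]_n) (a : R) : dotp u (const_mx a) = (\sum_i u 0 i) * a.
Proof. by rewrite /dotp mulr_suml; apply: eq_bigr => i _; rewrite mxE. Qed.

Hypotheses (Ccyclic : is_cyclic_code C) (Cdual : self_dual C).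

Lemma self_dual_ann_constant (a : R) :
  (forall b, b \in constant_words -> a * b = 0) -> a \in constant_words.
Proof.
move=> ann_a; rewrite inE Cdual inE; apply/forallP=> u; apply/implyP=> Cu.
by rewrite dotp_const_mx mulrC ann_a // cyclic_code_sum_constant.
Qed.

Lemma self_dual_constant_sqr (a : R) : a \in constant_words -> (a * a) *+ n = 0.
Proof.
rewrite inE => Ca; have : const_mx a \in dual_code C by rewrite -Cdual.
rewrite inE => /forallP /(_ (const_mx a)); rewrite Ca => /eqP.
by rewrite dotp_const_mx; under eq_bigr do rewrite mxE; rewrite sumr_const card_ord mulrnAl.
Qed.

End ConstantWords.

Arguments constant_words {R n} C.

Lemma chain_ring_ann_closed_ideal {R : finComNzRingType} (g : R) (m : nat) (I : {set R}) :
  (forall J K : {set R}, is_ideal J -> is_ideal K -> J \subset K \/ K \subset J) ->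
  [set x : R | ~~ is_unitb x] = principal g -> g ^+ (m + m).+1 = 0 ->
  is_ideal I -> (forall a, (forall b, b \in I -> a * b = 0) -> a \in I) ->
  g ^+ m \in I.
Proof.
move=> chain nonunits g_nil Iid ann_closed.
have [I_sub | gm_sub] := chain _ _ Iid (principal_ideal (g ^+ m)); last first.
  by apply: (subsetP gm_sub); apply/principalP; exists 1; rewrite mulr1.
apply: contraT => gm_notin; case/negP: (gm_notin); apply: ann_closed => b Ib.
have [r b_eq] := principalP _ _ (subsetP I_sub b Ib).
case: (boolP (is_unitb r)) => [/existsP [s /eqP rs1] | r_nonunit].
  case/negP: gm_notin.
  by rewrite -[g ^+ m]mulr1 -rs1 mulrA -b_eq mulrC idealMl.
rewrite b_eq; have /principalP [t ->] : r \in principal g by rewrite -nonunits inE.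
by rewrite !mulrA -exprD -exprSr g_nil !mul0r.
Qed.

Theorem mainTheorem16 (R : finComNzRingType) (g : R) (e : nat)
  (hR : chain_ring_with g e) (he : odd e)
  (n : nat) (hn : (0 < n)%N) (hcop : coprime n (residue_size g)) :
  ~ exists C : {set 'rV[R]_n}, is_cyclic_code C /\ self_dual C.
Proof.
move=> [C [Ccyclic Cdual]]; case: hR => chain nonunits g_nil g_pred_nz.
pose m := e./2.
have e_eq : e = (m + m).+1 by rewrite addnn -[LHS]odd_double_half he.
have [u /eqP nu1] := existsP (natr_unitb_coprime_residue _ _ nonunits hcop).
have gm_in : g ^+ m \in constant_words C.
  apply: (chain_ring_ann_closed_ideal _ _ _ chain nonunits).
  - by rewrite -e_eq.
  - by case: Ccyclic => /constant_words_ideal.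
  - exact: self_dual_ann_constant.
have := self_dual_constant_sqr Cdual _ gm_in.
rewrite -exprD -mulr_natr => /(congr1 (fun z => z * u)).
rewrite -mulrA nu1 mulr1 mul0r => g2m0.
by move: g_pred_nz; rewrite e_eq succnK g2m0 eqxx.
Qed.
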